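(* If $\mathcal O\subseteq\mathbb F$ is regular, then there are finitely many $\approx_{\mathcal O}$-equivalence classes on $\mathbb F$, and each of these classes is a regular subset of $\mathbb F$.
   Context: Fix a type $\sigma$ (finite set of relation symbols with arities). $\mathrm{Inc}(\mathbf A)$ of a $\sigma$-structure $\mathbf A$ is the bipartite multigraph with parts $V(\mathbf A)$ and the blocks $(R,(x_1,\dots,x_r))$, $(x_1,\dots,x_r)\in R(\mathbf A)$, with one edge joining $x_i$ to the block for each $i$; $\mathbf A$ is a $\sigma$-forest if $\mathrm{Inc}(\mathbf A)$ has no cycles or parallel edges. $\mathbb F$ is the set of isomorphism classes of $\sigma$-forests, $\mathbb F_{\mathrm r}$ that of rooted $\sigma$-forests. $(\mathbf A,a)+(\mathbf B,b)$: disjoint union with $a,b$ identified as new root; $[(\mathbf A,a)]$ forgets the root. $\mathcal O\subseteq\mathbb F$ is regular if there are only finitely many distinct sets $\mathcal O-(\mathbf A,a)=\{(\mathbf B,b)\in\mathbb F_{\mathrm r}:[(\mathbf A,a)+(\mathbf B,b)]\in\mathcal O\}$. For unrooted forests, $\mathbf A+\mathbf B$ is disjoint union, $\mathcal O-\mathbf A=\{\mathbf B\in\mathbb F:\mathbf A+\mathbf B\in\mathcal O\}$, and $\mathbf A\approx_{\mathcal O}\mathbf A'$ iff $\mathcal O-\mathbf A=\mathcal O-\mathbf A'$. *)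

From HB Require Import structures.
From mathcomp Require Import all_boot.

Unset Strict Implicit.
Unset Printing Implicit Defensive.

Record sstruct (sig : finType) (ar : sig -> nat) := SStruct {
  svert : finType;
  srel : forall R : sig, {set (ar R).-tuple svert} }.
Arguments sstruct {sig} ar.
Arguments SStruct {sig ar} svert srel.
Arguments svert {sig ar} s.
Arguments srel {sig ar} s R.

(* Vertices of Inc(A): elements of V(A) (left) and blocks (R, t) (right). *)
Definition inc_vert {sig : finType} {ar : sig -> nat} (A : sstruct ar) : finType :=
  (svert A + {R : sig & (ar R).-tuple (svert A)})%type.

Definition inc_adj {sig : finType} {ar : sig -> nat} (A : sstruct ar)
  : rel (inc_vert A) :=
  fun u v =>
    match u, v with
    | inl x, inr (existT R t) => (t \in srel A R) && (x \in (t : seq _))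
    | inr (existT R t), inl x => (t \in srel A R) && (x \in (t : seq _))
    | _, _ => false
    end.

(* A is a sigma-forest: Inc(A) has no parallel edges (every tuple of a
   relation has pairwise distinct entries) and no cycles (no cycle of
   length >= 3 through distinct vertices of the underlying simple graph). *)
Definition is_forest {sig : finType} {ar : sig -> nat} (A : sstruct ar) : Prop :=
  (forall (R : sig) (t : (ar R).-tuple (svert A)), t \in srel A R -> uniq t) /\
  (forall c : seq (inc_vert A), ucycle (inc_adj A) c -> size c <= 2).

Definition iso {sig : finType} {ar : sig -> nat} (A B : sstruct ar) : Prop :=
  exists f : svert A -> svert B, bijective f /\
    forall (R : sig) (t : (ar R).-tuple (svert A)),
      (map_tuple f t \in srel B R) = (t \in srel A R).

Record rstruct (sig : finType) (ar : sig -> nat) := RStruct {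
  rbase : sstruct ar;
  rroot : svert rbase }.
Arguments rstruct {sig} ar.
Arguments RStruct {sig ar} rbase rroot.
Arguments rbase {sig ar} r.
Arguments rroot {sig ar} r.

Definition is_rforest {sig : finType} {ar : sig -> nat} (P : rstruct ar) : Prop :=
  is_forest (rbase P).

Definition dunion {sig : finType} {ar : sig -> nat} (A B : sstruct ar) : sstruct ar :=
  SStruct (svert A + svert B)%type
    (fun R => [set map_tuple inl t | t in srel A R]
              :|: [set map_tuple inr t | t in srel B R]).

(* Rooted sum (A,a) + (B,b): disjoint union with a and b identified; the
   vertex set is V(A) + (V(B) \ {b}), b being sent to a, which is the root. *)
Definition glue_map {sig : finType} {ar : sig -> nat} (P Q : rstruct ar)
  (y : svert (rbase Q)) : (svert (rbase P) + {y : svert (rbase Q) | y != rroot Q})%type :=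
  match insub y with Some y' => inr y' | None => inl (rroot P) end.

Definition rglue {sig : finType} {ar : sig -> nat} (P Q : rstruct ar) : rstruct ar :=
  RStruct
    (SStruct (svert (rbase P) + {y : svert (rbase Q) | y != rroot Q})%type
      (fun R => [set map_tuple inl t | t in srel (rbase P) R]
                :|: [set map_tuple (glue_map P Q) t | t in srel (rbase Q) R]))
    (inl (rroot P)).

(* O is a set of isomorphism classes of sigma-forests, represented as an
   isomorphism-invariant predicate on structures that holds only on forests. *)
Definition forest_class {sig : finType} {ar : sig -> nat} (O : sstruct ar -> Prop) : Prop :=
  (forall A, O A -> is_forest A) /\ (forall A B, iso A B -> O A -> O B).

Definition rminus {sig : finType} {ar : sig -> nat} (O : sstruct ar -> Prop)
  (P : rstruct ar) : rstruct ar -> Prop :=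
  fun Q => is_rforest Q /\ O (rbase (rglue P Q)).

Definition regular {sig : finType} {ar : sig -> nat} (O : sstruct ar -> Prop) : Prop :=
  exists (n : nat) (S : 'I_n -> rstruct ar -> Prop),
    forall P : rstruct ar, is_rforest P ->
      exists i : 'I_n, forall Q : rstruct ar, rminus O P Q <-> S i Q.

Definition uminus {sig : finType} {ar : sig -> nat} (O : sstruct ar -> Prop)
  (A : sstruct ar) : sstruct ar -> Prop :=
  fun B => is_forest B /\ O (dunion A B).

Definition equivO {sig : finType} {ar : sig -> nat} (O : sstruct ar -> Prop)
  (A A' : sstruct ar) : Prop :=
  forall B : sstruct ar, uminus O A B <-> uminus O A' B.

From HB Require Import structures.
From mathcomp Require Import all_boot.
From Stdlib Require Import Classical ClassicalEpsilon.

(* A nonempty forest A is determined up to ~_O by its residual O - (A,a) at any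
   vertex a, because A + B is isomorphic to (A,a) + (B + point, point); forests
   without vertices are determined by their nullary relations.  So regularity of
   O bounds the number of classes.  For the class of A0, the isomorphism
   [(P,p) + Q] + B = (P + B, p) + Q shows that [(P,p) + Q] ~_O A0 holds iff
   Q lies in O - (P + B, p) exactly when B lies in O - A0, for every forest B;
   this only depends on which pairs (residual of (P + B, p), [B in O - A0])
   occur, a subset of a finite set.  Disjoint unions and rooted sums of forests
   are forests: a cycle in the incidence graph of two forests glued along at
   most one vertex would have to stay on one side. *)

Section CycleTransfer.
Context {T U : eqType}.

Definition orel (e : rel U) : rel (option U) :=
  fun a b => if (a, b) is (Some x, Some y) then e x y else false.

Lemma ucycle_orel_map_Some (e : rel U) d : ucycle (orel e) (map Some d) = ucycle e d.
Proof.
rewrite /ucycle cycle_map (map_inj_uniq (@Some_inj _)).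
by congr (_ && _); apply: eq_cycle.
Qed.

Lemma ucycle_pmap (e : rel T) (e' : rel U) (h : T -> option U) c :
  {in c, forall u, h u} -> {in c &, injective h} ->
  {in c &, forall u v, e u v -> orel e' (h u) (h v)} ->
  ucycle e c -> ucycle e' (pmap h c) /\ size (pmap h c) = size c.
Proof.
move=> h_dom h_inj h_rel /andP[cyc_c uniq_c].
have map_hc : map Some (pmap h c) = map h c.
  by rewrite pmapS_filter; congr map; apply/all_filterP/allP.
split; last by rewrite size_pmap -count_predT; apply: eq_in_count.
rewrite -ucycle_orel_map_Some map_hc /ucycle cycle_map map_inj_in_uniq // uniq_c andbT.
by apply: (sub_in_cycle h_rel) => //; apply/allP.
Qed.

End CycleTransfer.

Section CycleSide.
Context {T : eqType}.
Variables (e : rel T) (side : T -> bool) (cut : pred T).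
Hypothesis side_edge : forall u v, e u v -> ~~ cut u -> ~~ cut v -> side u = side v.

Lemma path_constant_side x s :
  path e x s -> all (predC cut) (x :: s) -> {in x :: s, forall w, side w = side x}.
Proof.
elim: s x => [|y s IH] x /=; first by move=> _ _ w; rewrite inE => /eqP->.
case/andP=> exy p /and3P[cx cy cs] w; rewrite inE => /predU1P[-> //|ws].
have -> : side x = side y by apply: side_edge.
by rewrite (IH y p) //= cy.
Qed.

Lemma ucycle_one_side c :
  {in c &, forall u v, cut u -> cut v -> u = v} ->
  ucycle e c -> exists b, {in c, forall u, cut u || (side u == b)}.
Proof.
case: c => [|x0 s0] cut1 uc; first by exists true.
(* Rotate the cycle to start at its cut vertex, if any: the rest is a path avoiding cuts. *)
have [x [s [c_xs p_xs ok_s]]] : exists x s,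
    [/\ x0 :: s0 =i x :: s, path e x s & all (predC cut) s].
  have [z zc cz] : exists2 z, z \in x0 :: s0 & has cut (x0 :: s0) ==> cut z.
    by case: (boolP (has cut _)) => [/hasP[z]|]; [exists z|exists x0; rewrite ?mem_head].
  case: (rot_to zc) => i s rot_eq.
  have := uc; rewrite -(rot_ucycle i) rot_eq => /andP[/= + uniq_zs].
  rewrite rcons_path => /andP[p_zs _].
  have c_zs : x0 :: s0 =i z :: s by move=> w; rewrite -rot_eq mem_rot.
  exists z, s; split=> //; apply/allP=> w ws /=; apply/negP=> cw.
  have wc : w \in x0 :: s0 by rewrite c_zs inE ws orbT.
  have zw : z = w.
    by apply: cut1 => //; apply: (implyP cz); apply/hasP; exists w.
  by move: uniq_zs; rewrite zw ws.
exists (if s is y :: _ then side y else side x) => u; rewrite c_xs.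
case: s p_xs ok_s {c_xs} => [|y s] /=; first by rewrite inE => _ _ /eqP->; rewrite eqxx orbT.
case/andP=> exy p_ys /andP[cy cs]; rewrite inE => /predU1P[->|us].
  by case: (boolP (cut x)) => //= cx; rewrite (side_edge x y).
by rewrite (@path_constant_side y s) //= ?cy // eqxx orbT.
Qed.

End CycleSide.

Arguments ucycle_one_side {T e side cut} side_edge {c}.

Lemma map_tuple_comp {T0 T1 T2 : Type} {n} (f : T1 -> T2) (g : T0 -> T1)
    (t : n.-tuple T0) :
  map_tuple f (map_tuple g t) = map_tuple (f \o g) t.
Proof. by apply: val_inj; rewrite /= map_comp. Qed.

Lemma map_tuple_id {T : Type} {n} (t : n.-tuple T) : map_tuple id t = t.
Proof. by apply: val_inj; rewrite /= map_id. Qed.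

Lemma eq_map_tuple {T0 T1 : Type} {n} {f g : T0 -> T1} (t : n.-tuple T0) :
  f =1 g -> map_tuple f t = map_tuple g t.
Proof. by move=> fg; apply: val_inj; apply: eq_map. Qed.

Lemma map_tuple_inj (T0 T1 : eqType) n (f : T0 -> T1) :
  injective f -> injective (@map_tuple n _ _ f).
Proof. by move=> f_inj t1 t2 /(congr1 val) /(inj_map f_inj) /val_inj. Qed.

Lemma tuple_void {T : Type} {n} (u v : n.-tuple T) : (T -> False) -> u = v.
Proof.
move=> T_void; have nil_val (w : n.-tuple T) : val w = [::].
  by case: w => -[|x s] //; case: (T_void x).
by apply: val_inj; rewrite !nil_val.
Qed.

Section MapTupleImset.
Variables (T0 T1 T2 : finType) (n : nat).

Lemma imset_map_tuple_comp (f : T1 -> T2) (g : T0 -> T1) (A : {set n.-tuple T0}) :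
  [set map_tuple f t | t in [set map_tuple g s | s in A]] = [set map_tuple (f \o g) s | s in A].
Proof. by rewrite -imset_comp; apply: eq_imset => s; apply: map_tuple_comp. Qed.

Lemma eq_imset_map_tuple (f g : T0 -> T1) (A : {set n.-tuple T0}) :
  f =1 g -> [set map_tuple f t | t in A] = [set map_tuple g t | t in A].
Proof. by move=> fg; apply: eq_imset => t; apply: eq_map_tuple. Qed.

End MapTupleImset.

Lemma finite_representatives {T : Type} (I : finType) (P : T -> Prop)
    (E : T -> T -> Prop) (code : T -> I -> Prop) {x0 : T} :
  P x0 -> (forall x, P x -> exists k, code x k) ->
  (forall k x y, P x -> P y -> code x k -> code y k -> E x y) ->
  exists n (C : 'I_n -> T), (forall i, P (C i)) /\ forall x, P x -> exists i, E x (C i).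
Proof.
move=> P_x0 code_total code_E.
pose rep_spec k y := P y /\ ((exists2 x, P x & code x k) -> code y k).
have rep_ex k : exists y, rep_spec k y.
  case: (classic (exists2 x, P x & code x k)) => [[x Px cx]|no_x].
    by exists x; split.
  by exists x0; split=> // ex_x; case: no_x.
pose rep k := epsilon (inhabits x0) (rep_spec k).
have rep_specP k : rep_spec k (rep k) := epsilon_spec _ _ (rep_ex k).
exists #|I|, (fun j => rep (enum_val j)); split=> [j|x Px]; first exact: (rep_specP _).1.
have [k cx] := code_total x Px; exists (enum_rank k); rewrite enum_rankK.
by apply: (code_E k) => //; [exact: (rep_specP k).1|apply: (rep_specP k).2; exists x].
Qed.

Definition asbool (P : Prop) : bool := if excluded_middle_informative P then true else false.

Lemma asboolP (P : Prop) : reflect P (asbool P).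
Proof. by rewrite /asbool; case: excluded_middle_informative => [p|np]; constructor. Qed.

Section IncidencePreimage.
Context {sig : finType} {ar : sig -> nat}.
Context {X Y : sstruct ar}.
Variable g : svert Y -> svert X.

Definition inc_map (w : inc_vert Y) : inc_vert X :=
  match w with
  | inl y => inl (g y)
  | inr (existT R s) => inr (existT _ R (map_tuple g s))
  end.

Definition inc_preim (u : inc_vert X) : option (inc_vert Y) :=
  match u with
  | inl x => omap inl [pick y | g y == x]
  | inr (existT R t) =>
      omap (fun s => inr (existT _ R s)) [pick s | (s \in srel Y R) && (map_tuple g s == t)]
  end.

Lemma inc_preimK {u w} : inc_preim u = Some w -> u = inc_map w.
Proof.
case: u => [x|[R t]] /=.
  by case: pickP => // y /eqP <- [<-].
by case: pickP => // s /andP[_ /eqP <-] [<-].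
Qed.

Lemma inc_preim_vert x : inc_preim (inl x) = (x \in codom g) :> bool.
Proof.
rewrite /=; case: pickP => [y /eqP <-|no_y] /=; first by rewrite codom_f.
by apply/esym/codomP=> -[y gy]; have := no_y y; rewrite gy eqxx.
Qed.

Lemma inc_preim_blockP R t :
  reflect (exists2 s, s \in srel Y R & t = map_tuple g s) (inc_preim (inr (existT _ R t))).
Proof.
rewrite /=; case: pickP => [s /andP[sY /eqP <-]|no_s] /=; first by left; exists s.
by right=> -[s sY ts]; have := no_s s; rewrite sY ts eqxx.
Qed.

Lemma inc_preim_adj : injective g -> forall u v, inc_preim u -> inc_preim v ->
  inc_adj X u v -> orel (inc_adj Y) (inc_preim u) (inc_preim v).
Proof.
move=> g_inj [x|[R t]] [x'|[R' t']] //=.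
- case: pickP => // y /eqP <- _; case: pickP => // s /andP[sY /eqP <-] _ /andP[_].
  by rewrite /= (mem_map g_inj) => ys; rewrite /orel /= sY.
- case: pickP => // s /andP[sY /eqP <-] _; case: pickP => // y /eqP <- _ /andP[_].
  by rewrite /= (mem_map g_inj) => ys; rewrite /orel /= sY.
Qed.

Lemma ucycle_inc_preim : injective g -> is_forest Y -> forall c,
  {in c, forall u, inc_preim u} -> ucycle (inc_adj X) c -> size c <= 2.
Proof.
move=> g_inj [_ Y_acyclic] c c_dom uc.
have [] := @ucycle_pmap _ _ _ (inc_adj Y) _ _ c_dom _ _ uc.
- move=> u v uc' vc' Euv; case Eu: (inc_preim u) (c_dom u uc') => [w|] // _.
  by rewrite Eu in Euv; rewrite (inc_preimK Eu) (inc_preimK (esym Euv)).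
- by move=> u v uc' vc'; apply: inc_preim_adj; rewrite ?c_dom.
by move=> /Y_acyclic + <-; rewrite size_pmap.
Qed.

End IncidencePreimage.

Arguments ucycle_inc_preim {sig ar X Y g}.

Section Amalgam.
Context {sig : finType} {ar : sig -> nat}.
Variables (X Y1 Y2 : sstruct ar) (g1 : svert Y1 -> svert X) (g2 : svert Y2 -> svert X).
Hypotheses (g1_inj : injective g1) (g2_inj : injective g2).
Hypothesis srel_amalgam : forall R,
  srel X R = [set map_tuple g1 s | s in srel Y1 R] :|: [set map_tuple g2 s | s in srel Y2 R].
Hypothesis codom_meet : forall x x',
  x \in codom g1 -> x \in codom g2 -> x' \in codom g1 -> x' \in codom g2 -> x = x'.

Lemma srel_amalgamP R t : t \in srel X R ->
  (exists2 s, s \in srel Y1 R & t = map_tuple g1 s) \/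
  (exists2 s, s \in srel Y2 R & t = map_tuple g2 s).
Proof. by rewrite srel_amalgam => /setUP[] /imsetP[s sY ->]; [left|right]; exists s. Qed.

(* [side u] says that u comes from Y1; the only cut is the vertex shared by both images. *)
Let side (u : inc_vert X) : bool := inc_preim g1 u.
Let cut (u : inc_vert X) : bool :=
  if u is inl x then (x \in codom g1) && (x \in codom g2) else false.

Let side_vertex_block x R t : t \in srel X R -> x \in (t : seq _) ->
  ~~ cut (inl x) -> side (inl x) = side (inr (existT _ R t)).
Proof.
rewrite /side /cut inc_preim_vert => tX xt cx; apply/idP/inc_preim_blockP.
  case/srel_amalgamP: tX => -[s sY ts] x1; first by exists s.
  have /mapP[y _ xy] : x \in map g2 s by move: xt; rewrite ts.
  by move: cx; rewrite x1 xy codom_f.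
by case=> s _ ts; move: xt; rewrite ts => /mapP[y _ ->]; rewrite codom_f.
Qed.

Let side_edge u v : inc_adj X u v -> ~~ cut u -> ~~ cut v -> side u = side v.
Proof.
case: u v => [x|[R t]] [y|[R' t']] //= /andP[tX xt].
  by move=> cx _; apply: side_vertex_block.
by move=> _ cy; symmetry; apply: side_vertex_block.
Qed.

Let g2_side_preim u v : inc_adj X u v -> cut u || ~~ side u -> inc_preim g2 u.
Proof.
rewrite /side /cut; case: u v => [x|[R t]] [y|[R' t']] //= /andP[tX xt].
  rewrite !inc_preim_vert; case/orP=> [/andP[] //|x1'].
  case/srel_amalgamP: tX => -[s _ ts]; move: xt x1'; rewrite ts => /mapP[y' _ ->].
    by rewrite codom_f.
  by rewrite codom_f.
move=> no_preim1; apply/inc_preim_blockP.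
case/srel_amalgamP: tX => -[s sY ts]; last by exists s.
by case/negP: no_preim1; apply/inc_preim_blockP; exists s.
Qed.

Lemma forest_amalgam : is_forest Y1 -> is_forest Y2 -> is_forest X.
Proof.
move=> F1 F2; split=> [R t /srel_amalgamP[] [s sY ->] | c uc].
- by rewrite map_inj_uniq ?F1.1.
- by rewrite map_inj_uniq ?F2.1.
have cut1 : {in c &, forall u v, cut u -> cut v -> u = v}.
  move=> [x|//] [x'|//] _ _ /andP[x1 x2] /andP[x1' x2'].
  by congr inl; apply: codom_meet.
have [[] one_side] := ucycle_one_side side_edge cut1 uc.
  apply: (ucycle_inc_preim g1_inj F1 _ _ uc) => u uc'.
  case/orP: (one_side u uc') => [|/eqP //].
  by case: u {uc'} => // x /andP[+ _]; rewrite -inc_preim_vert.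
apply: (ucycle_inc_preim g2_inj F2 _ _ uc) => u uc'.
apply: (g2_side_preim _ _ (next_cycle (andP uc).1 uc')).
by case/orP: (one_side u uc') => [-> //|/eqP ->]; rewrite orbT.
Qed.

End Amalgam.

Section Forests.
Context {sig : finType} {ar : sig -> nat}.

Definition point : sstruct ar := SStruct unit (fun _ => set0).

Definition add_point (B : sstruct ar) : rstruct ar := RStruct (dunion B point) (inr tt).

Lemma forest_point : is_forest point.
Proof.
have no_edge u v : inc_adj point u v = false.
  by case: u v => [?|[? ?]] [?|[? ?]]; rewrite //= inE.
split=> [R t|[|u [|v c]] /andP[] //]; first by rewrite inE.
by rewrite /= no_edge.
Qed.

Lemma forest_dunion {A B : sstruct ar} :
  is_forest A -> is_forest B -> is_forest (dunion A B).
Proof.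
apply: (@forest_amalgam _ _ (dunion A B) A B inl inr) => //.
- by move=> a b [].
- by move=> a b [].
by move=> x x' /codomP[a ->] /codomP[].
Qed.

Lemma glue_map_inj (P Q : rstruct ar) : injective (glue_map P Q).
Proof.
rewrite /glue_map => y1 y2.
by case: insubP => [y1' _ <-|/negPn/eqP->]; case: insubP => [y2' _ <-|/negPn/eqP->] // [->].
Qed.

Lemma forest_glue (P Q : rstruct ar) :
  is_rforest P -> is_rforest Q -> is_forest (rbase (rglue P Q)).
Proof.
have glued_root x : x \in codom inl -> x \in codom (glue_map P Q) -> x = inl (rroot P).
  case/codomP=> a -> /codomP[y]; rewrite /glue_map.
  by case: insubP => [y' _ _ //|_ [->]].
apply: (@forest_amalgam _ _ (rbase (rglue P Q)) _ _ inl (glue_map P Q)) => //.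
- by move=> x y [].
- exact: glue_map_inj.
by move=> x x' x1 x2 x1' x2'; rewrite (glued_root x) // (glued_root x').
Qed.

End Forests.

Section Isomorphisms.
Context {sig : finType} {ar : sig -> nat}.

Lemma iso_of_imset (X Y : sstruct ar) (f : svert X -> svert Y) : bijective f ->
  (forall R, [set map_tuple f t | t in srel X R] = srel Y R) -> iso X Y.
Proof.
move=> f_bij f_rel; exists f; split=> // R t.
by rewrite -f_rel mem_imset //; apply/map_tuple_inj/bij_inj.
Qed.

Lemma iso_imset (X Y : sstruct ar) : iso X Y -> exists f : svert X -> svert Y,
  bijective f /\ forall R, [set map_tuple f t | t in srel X R] = srel Y R.
Proof.
move=> [f [f_bij f_rel]]; exists f; split=> // R; case: (f_bij) => g fK gK.
apply/setP=> t; apply/imsetP/idP => [[s sX ->]|tY]; first by rewrite f_rel.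
have gtK : map_tuple f (map_tuple g t) = t.
  by rewrite map_tuple_comp (eq_map_tuple _ gK) map_tuple_id.
by exists (map_tuple g t); rewrite ?gtK // -f_rel gtK.
Qed.

Lemma iso_refl (X : sstruct ar) : iso X X.
Proof. by exists id; split=> [|R t]; [exists id|rewrite map_tuple_id]. Qed.

Lemma iso_sym (X Y : sstruct ar) : iso X Y -> iso Y X.
Proof.
move=> [f [f_bij f_rel]]; case: (f_bij) => g fK gK; exists g; split; first by exists f.
move=> R t; rewrite -(f_rel R (map_tuple g t)) map_tuple_comp (eq_map_tuple _ gK).
by rewrite map_tuple_id.
Qed.

Lemma iso_dunion {A A' B B' : sstruct ar} :
  iso A A' -> iso B B' -> iso (dunion A B) (dunion A' B').
Proof.
move=> /iso_imset[f [[f' fK f'K] f_rel]] /iso_imset[h [[h' hK h'K] h_rel]].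
pose F (v : svert (dunion A B)) : svert (dunion A' B') :=
  match v with inl a => inl (f a) | inr b => inr (h b) end.
pose F' (v : svert (dunion A' B')) : svert (dunion A B) :=
  match v with inl a => inl (f' a) | inr b => inr (h' b) end.
apply: (@iso_of_imset _ _ F); first by exists F' => -[a|b] /=; rewrite ?fK ?hK ?f'K ?h'K.
move=> R; rewrite /= imsetU !imset_map_tuple_comp -f_rel -h_rel !imset_map_tuple_comp.
by congr (_ :|: _); apply: eq_imset_map_tuple.
Qed.

Definition inhabited_rels (A : sstruct ar) : {set sig} :=
  [set R | [exists t : (ar R).-tuple (svert A), t \in srel A R]].

Lemma iso_void (A A' : sstruct ar) : (svert A -> False) -> (svert A' -> False) ->
  inhabited_rels A = inhabited_rels A' -> iso A A'.
Proof.
move=> A_void A'_void rels_eq.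
have void_rel (Z : sstruct ar) R (t : (ar R).-tuple (svert Z)) :
    (svert Z -> False) -> (t \in srel Z R) = (R \in inhabited_rels Z).
  move=> Z_void; rewrite inE; apply/idP/existsP => [|[t']]; first by exists t.
  by rewrite (tuple_void t t' Z_void).
exists (fun x => match A_void x with end); split.
  by exists (fun y => match A'_void y with end) => [x|y];
    [case: (A_void x)|case: (A'_void y)].
by move=> R t; rewrite !void_rel // rels_eq.
Qed.

Definition rdunion (P : rstruct ar) (B : sstruct ar) : rstruct ar :=
  RStruct (dunion (rbase P) B) (inl (rroot P)).

Lemma iso_glue_add_point (A B : sstruct ar) (a : svert A) :
  iso (rbase (rglue (RStruct A a) (add_point B))) (dunion A B).
Proof.
set X := rbase _.
have not_pt (b : svert B) : (inl b : svert (dunion B point)) != inr tt by [].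
pose F (v : svert X) : svert (dunion A B) :=
  match v with inl x => inl x | inr y => if val y is inl b then inr b else inl a end.
pose G (v : svert (dunion A B)) : svert X :=
  match v with inl x => inl x | inr b => inr (Sub (inl b) (not_pt b)) end.
apply: (@iso_of_imset _ _ F).
  by exists G => [[x|[[b|[]] p]]|[]] //=; congr inr; apply: val_inj.
move=> R; rewrite /= imsetU !imset_map_tuple_comp imsetU imset_map_tuple_comp !imset0 setU0.
congr (_ :|: _); apply: eq_imset_map_tuple => b /=.
by rewrite /glue_map; case: insubP => [y _ yb|] //=; rewrite yb.
Qed.

Lemma iso_dunion_glue (P Q : rstruct ar) (B : sstruct ar) :
  iso (dunion (rbase (rglue P Q)) B) (rbase (rglue (rdunion P B) Q)).
Proof.
set X := dunion _ _; set Y := rbase _.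
pose F (v : svert X) : svert Y :=
  match v with inl (inl x) => inl (inl x) | inl (inr y) => inr y | inr b => inl (inr b) end.
pose G (v : svert Y) : svert X :=
  match v with inl (inl x) => inl (inl x) | inr y => inl (inr y) | inl (inr b) => inr b end.
apply: (@iso_of_imset _ _ F); first by exists G => [[[x|y]|b]|[[x|b]|y]].
move=> R; rewrite /= !imsetU !imset_map_tuple_comp -setUA [X in _ :|: X]setUC setUA.
congr (_ :|: _ :|: _); apply: eq_imset_map_tuple => // y.
by rewrite /= /glue_map; case: insubP.
Qed.

End Isomorphisms.

Lemma regular_finType {sig : finType} {ar : sig -> nat} (O : sstruct ar -> Prop)
    (I : finType) (S : I -> rstruct ar -> Prop) :
  (forall P, is_rforest P -> exists i, forall Q, rminus O P Q <-> S i Q) -> regular O.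
Proof.
move=> S_res; exists #|I|, (fun j => S (enum_val j)) => P /S_res[i res_i].
by exists (enum_rank i); rewrite enum_rankK.
Qed.

Section Residuals.
Context {sig : finType} {ar : sig -> nat}.
Variable O : sstruct ar -> Prop.
Hypothesis O_class : forest_class O.

Lemma O_iso {X Y : sstruct ar} : iso X Y -> O X <-> O Y.
Proof. by case: O_class => _ O_inv XY; split; apply: O_inv => //; apply: iso_sym. Qed.

Lemma equivO_iso (A A' : sstruct ar) : iso A A' -> equivO O A A'.
Proof.
move=> AA' B; rewrite /uminus.
by rewrite (O_iso (iso_dunion AA' (iso_refl B))).
Qed.

Lemma O_dunion_add_point {A B : sstruct ar} (a : svert A) : is_forest B ->
  O (dunion A B) <-> rminus O (RStruct A a) (add_point B).
Proof.
move=> B_forest; rewrite /rminus -(O_iso (iso_glue_add_point A B a)).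
by have := forest_dunion B_forest forest_point; tauto.
Qed.

Lemma equivO_rminus {A A' : sstruct ar} (a : svert A) (a' : svert A') :
  (forall Q, rminus O (RStruct A a) Q <-> rminus O (RStruct A' a') Q) -> equivO O A A'.
Proof.
move=> res_eq B; rewrite /uminus; split=> -[B_forest OB]; split=> //.
  by apply/(O_dunion_add_point a' B_forest)/res_eq/(O_dunion_add_point a B_forest).
by apply/(O_dunion_add_point a B_forest)/res_eq/(O_dunion_add_point a' B_forest).
Qed.

Lemma uminus_glue (P Q : rstruct ar) (B : sstruct ar) : is_rforest Q -> is_forest B ->
  uminus O (rbase (rglue P Q)) B <-> rminus O (rdunion P B) Q.
Proof.
move=> Q_forest B_forest; rewrite /uminus /rminus (O_iso (iso_dunion_glue P Q B)).
by tauto.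
Qed.

Section Classes.
Variables (n : nat) (S : 'I_n -> rstruct ar -> Prop).
Hypothesis S_res : forall P, is_rforest P -> exists i, forall Q, rminus O P Q <-> S i Q.

(* A forest with a vertex a is coded by the residual class of (A,a); a forest without
   vertices by its set of nonempty (necessarily nullary) relations. *)
Definition class_code (A : sstruct ar) (k : 'I_n + {set sig}) : Prop :=
  match k with
  | inl i => exists a, forall Q, rminus O (RStruct A a) Q <-> S i Q
  | inr N => (svert A -> False) /\ inhabited_rels A = N
  end.

Lemma finite_equivO_classes : exists m (C : 'I_m -> sstruct ar),
  (forall i, is_forest (C i)) /\ forall A, is_forest A -> exists i, equivO O A (C i).
Proof.
apply: (finite_representatives _ _ _ class_code forest_point).
  move=> A A_forest; case: (pickP (fun _ : svert A => true)) => [a _|A_void].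
    by have [i res_i] := S_res (RStruct A a) A_forest; exists (inl i), a.
  by exists (inr (inhabited_rels A)); split=> // a; have := A_void a.
move=> [i|N] A A' _ _ /=.
  move=> [a res_a] [a' res_a']; apply: (equivO_rminus a a') => Q.
  by rewrite res_a res_a'.
move=> [A_void rels_A] [A'_void rels_A']; apply/equivO_iso/iso_void => //.
by rewrite rels_A rels_A'.
Qed.

Definition glue_code (P : rstruct ar) (A0 : sstruct ar) : {set 'I_n * bool} :=
  [set jb : 'I_n * bool | asbool (exists2 B, is_forest B &
     (forall Q, rminus O (rdunion P B) Q <-> S jb.1 Q) /\ (uminus O A0 B <-> jb.2))].

Lemma equivO_glue_code (P Q : rstruct ar) (A0 : sstruct ar) :
  is_rforest P -> is_rforest Q ->
  equivO O (rbase (rglue P Q)) A0 <->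
  forall jb, jb \in glue_code P A0 -> (S jb.1 Q <-> jb.2).
Proof.
move=> P_forest Q_forest; split.
  move=> glue_eq jb; rewrite inE => /asboolP[B B_forest [res_B A0_B]].
  by rewrite -res_B -A0_B -(glue_eq B) uminus_glue.
move=> code_eq B; case: (classic (is_forest B)) => B_forest; last by rewrite /uminus; tauto.
have [i res_i] := S_res (rdunion P B) (forest_dunion P_forest B_forest).
have code_i : (i, asbool (uminus O A0 B)) \in glue_code P A0.
  by rewrite inE; apply/asboolP; exists B => //; split=> //=; split=> /asboolP.
by rewrite uminus_glue // res_i (code_eq _ code_i); split=> /asboolP.
Qed.

Lemma regular_equivO_class (A0 : sstruct ar) :
  regular (fun A => is_forest A /\ equivO O A A0).
Proof.
pose S' (T : {set 'I_n * bool}) Q :=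
  is_rforest Q /\ forall jb, jb \in T -> (S jb.1 Q <-> jb.2).
apply: (regular_finType _ _ S') => P P_forest; exists (glue_code P A0) => Q.
rewrite /rminus /S'; split=> [[Q_forest [_ glue_eq]]|[Q_forest code_eq]].
  by split=> //; apply/equivO_glue_code.
by do 2!split=> //; [apply: forest_glue|apply/equivO_glue_code].
Qed.

End Classes.

End Residuals.

Theorem lemma4p4 (sig : finType) (ar : sig -> nat) (O : sstruct ar -> Prop) :
  forest_class O -> regular O ->
  (exists (n : nat) (C : 'I_n -> sstruct ar),
      (forall i, is_forest (C i)) /\
      forall A, is_forest A -> exists i, equivO O A (C i)) /\
  (forall A, is_forest A -> regular (fun A' => is_forest A' /\ equivO O A' A)).
Proof.
move=> O_class [n [S S_res]]; split; first exact: finite_equivO_classes S_res.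
by move=> A _; apply: regular_equivO_class S_res A.
Qed.
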